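(* For all $0<\varepsilon<1/8$, for all sufficiently large $\ell>0$, for all $x,y\in\bar B(0,2\ell)$ with $x\neq y$ and all $\ell'$ with $\|x-y\|\le\ell'\le2\ell$, there exist $\hat x,\hat y\in\bar B(0,3\ell)\cap\mathbb Z^d$ with $\|\hat x-\hat y\|\ge\|x-y\|$ such that every element of $\mathcal G_1(x,y,\ell')$ is included in an element of $\mathcal G_1(\hat x,\hat y,\ell'+8\varepsilon\ell)$.
   Context: Fix $d\ge2$; Euclidean norm $\|\cdot\|$, inner product $\langle\cdot,\cdot\rangle$; $\bar B(x,r)$ is the closed Euclidean ball. Paths: finite sequences $(x_0,\dots,x_r)$ in $\mathbb R^d$, length $\sum\|x_i-x_{i+1}\|$. Animals: finite connected graphs $\xi=(V,E)$ with $V\subseteq\mathbb R^d$, length $\sum_{\{x,y\}\in E}\|x-y\|$; inclusion of animals is inclusion as subgraphs. $\mathcal P(x,y,\ell)$: paths from $x$ to $y$ of length $\le\ell$; $\mathcal A^*(x,y,\ell)$: animals empty or with $\|\xi\|+\mathrm d(x,V)+\mathrm d(y,V)\le\ell$. $\mathcal G$ denotes either $\mathcal P$ or $\mathcal A^*$. For $x\ne y$, $D_1(x,y)=\{z:\langle z-x,y-x\rangle\ge0,\ \langle z-y,x-y\rangle\ge0\}$ and $\mathcal G_1(x,y,\ell)=\{\xi\in\mathcal G(x,y,\ell):\xi\subseteq D_1(x,y)\}$. *)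

From HB Require Import structures.
From mathcomp Require Import all_boot all_order all_algebra.
From mathcomp Require Import reals.
Set Implicit Arguments. Unset Strict Implicit. Unset Printing Implicit Defensive.
Import Order.TTheory GRing.Theory Num.Theory.
Local Open Scope ring_scope.

Section Defs.
Variables (R : realType) (d : nat).
Notation pt := 'rV[R]_d.

Definition dotp (u v : pt) : R := \sum_(i < d) u 0 i * v 0 i.
Definition enorm (u : pt) : R := Num.sqrt (dotp u u).

Definition cball (c : pt) (r : R) (z : pt) : bool := enorm (z - c) <= r.

Definition is_lattice (z : pt) : bool := [forall i : 'I_d, z 0 i \is a Num.int].

Definition D1 (x y : pt) (z : pt) : bool :=
  (0 <= dotp (z - x) (y - x)) && (0 <= dotp (z - y) (x - y)).

(* a path (x_0,...,x_r) is a nonempty sequence of points *)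
Definition path_len (p : seq pt) : R :=
  \sum_(e <- zip p (behead p)) enorm (e.1 - e.2).

Definition path_edges (p : seq pt) : seq (pt * pt) := zip p (behead p).

Definition inP (x y : pt) (l : R) (p : seq pt) : Prop :=
  [/\ p != [::], head x p = x, last x p = y & path_len p <= l].

(* inclusion of paths, viewed as graphs (vertices + edges between
   consecutive points, edges unoriented) *)
Definition path_incl (p q : seq pt) : Prop :=
  {subset p <= q} /\
  forall e, e \in path_edges p ->
    (e \in path_edges q) \/ ((e.2, e.1) \in path_edges q).

Definition inP1 (x y : pt) (l : R) (p : seq pt) : Prop :=
  inP x y l p /\ all (D1 x y) p.

(* an animal: vertex list V and edge list E (unoriented edges, stored once) *)
Record animal := Animal { aV : seq pt; aE : seq (pt * pt) }.

Definition adj (E : seq (pt * pt)) (a b : pt) : bool :=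
  ((a, b) \in E) || ((b, a) \in E).

Definition is_animal (A : animal) : Prop :=
  [/\ uniq (aV A),
      (forall e, e \in aE A -> [/\ e.1 \in aV A, e.2 \in aV A & e.1 != e.2]),
      uniq (aE A) /\ (forall e, e \in aE A -> (e.2, e.1) \notin aE A) &
      forall u v, u \in aV A -> v \in aV A ->
        exists s : seq pt, path (adj (aE A)) u s /\ last u s = v].

Definition animal_len (A : animal) : R :=
  \sum_(e <- aE A) enorm (e.1 - e.2).

(* d(x, V) for nonempty V *)
Definition dist_set (x : pt) (V : seq pt) : R :=
  \big[Order.min/enorm (x - head x V)]_(v <- V) enorm (x - v).

Definition inA (x y : pt) (l : R) (A : animal) : Prop :=
  is_animal A /\
  (aV A = [::] \/ animal_len A + dist_set x (aV A) + dist_set y (aV A) <= l).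

Definition animal_incl (A B : animal) : Prop :=
  {subset aV A <= aV B} /\
  forall e, e \in aE A -> adj (aE B) e.1 e.2.

Definition inA1 (x y : pt) (l : R) (A : animal) : Prop :=
  inA x y l A /\ all (D1 x y) (aV A).

End Defs.

(* Let u be the unit vector pointing from y to x. Push the endpoints apart to
   x + t u and y - t u, with t = 2 eps l, and round them down to the lattice, an
   error of at most d. Each endpoint moves by at most t + d <= 4 eps l and they do
   not get closer. Since t^2 dominates d l, the slab D_1(xh, yh) still contains
   D_1(x, y) intersected with the ball of radius 2l around x, where all vertices
   of the elements of G_1(x, y, l') lie. A path is then extended by the segments
   [xh, x] and [y, yh]; an animal is kept as it is, its distances to the new
   endpoints growing by at most |xh - x| and |yh - y|. *)

From HB Require Import structures.
From mathcomp Require Import all_boot all_order all_algebra.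
From mathcomp Require Import reals ring lra.
Import Order.TTheory GRing.Theory Num.Theory.
Local Open Scope ring_scope.
Set Implicit Arguments. Unset Strict Implicit.

Section Euclid.
Variables (R : realType) (d : nat).
Notation pt := 'rV[R]_d.
Implicit Types u v w x y : pt.

Lemma dotpC u v : dotp u v = dotp v u.
Proof. by apply: eq_bigr => i _; rewrite mulrC. Qed.

Lemma dotpDl u v w : dotp (u + v) w = dotp u w + dotp v w.
Proof. by rewrite /dotp -big_split; apply: eq_bigr => i _; rewrite !mxE mulrDl. Qed.

Lemma dotpNl u w : dotp (- u) w = - dotp u w.
Proof. by rewrite /dotp -sumrN; apply: eq_bigr => i _; rewrite !mxE mulNr. Qed.

Lemma dotpZl a u w : dotp (a *: u) w = a * dotp u w.
Proof. by rewrite /dotp mulr_sumr; apply: eq_bigr => i _; rewrite !mxE mulrA. Qed.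

Lemma dotpBl u v w : dotp (u - v) w = dotp u w - dotp v w.
Proof. by rewrite dotpDl dotpNl. Qed.

Lemma dotpDr u v w : dotp w (u + v) = dotp w u + dotp w v.
Proof. by rewrite dotpC dotpDl !(dotpC w). Qed.

Lemma dotpNr u w : dotp w (- u) = - dotp w u.
Proof. by rewrite dotpC dotpNl dotpC. Qed.

Lemma dotpBr u v w : dotp w (u - v) = dotp w u - dotp w v.
Proof. by rewrite dotpDr dotpNr. Qed.

Lemma dotpZr a u w : dotp w (a *: u) = a * dotp w u.
Proof. by rewrite dotpC dotpZl dotpC. Qed.

Lemma dotp0l w : dotp 0 w = 0.
Proof. by rewrite -(scale0r 0) dotpZl mul0r. Qed.

Lemma dotpp_ge0 u : 0 <= dotp u u.
Proof. by apply: sumr_ge0 => i _; rewrite -expr2 sqr_ge0. Qed.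

Lemma dotpp_eq0 u : (dotp u u == 0) = (u == 0).
Proof.
apply/eqP/eqP => [|->]; last exact: dotp0l.
rewrite /dotp => /eqP; rewrite psumr_eq0 => [/allP u0|i _]; last by rewrite -expr2 sqr_ge0.
apply/rowP => i; have /implyP := u0 i (mem_index_enum i).
by rewrite mxE -expr2 sqrf_eq0 => /(_ isT)/eqP.
Qed.

Lemma enorm_ge0 u : 0 <= enorm u.
Proof. exact: sqrtr_ge0. Qed.

Lemma sqr_enorm u : enorm u ^+ 2 = dotp u u.
Proof. by rewrite sqr_sqrtr // dotpp_ge0. Qed.

Lemma enorm_gt0 u : u != 0 -> 0 < enorm u.
Proof. by move=> u0; rewrite sqrtr_gt0 lt_def dotpp_eq0 u0 dotpp_ge0. Qed.

Lemma enorm0 : enorm (0 : pt) = 0.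
Proof. by rewrite /enorm dotp0l sqrtr0. Qed.

Lemma enormN u : enorm (- u) = enorm u.
Proof. by rewrite /enorm dotpNl dotpNr opprK. Qed.

Lemma enormZ a u : enorm (a *: u) = `|a| * enorm u.
Proof. by rewrite /enorm dotpZl dotpZr mulrA -expr2 sqrtrM ?sqr_ge0 // sqrtr_sqr. Qed.

Lemma distC u v : enorm (u - v) = enorm (v - u).
Proof. by rewrite -enormN opprB. Qed.

Lemma enorm_le u c : 0 <= c -> dotp u u <= c ^+ 2 -> enorm u <= c.
Proof. by move=> c0 h; rewrite -(ler_pXn2r (n := 2)) ?nnegrE ?sqr_enorm ?enorm_ge0. Qed.

(* Cauchy-Schwarz: expand [0 <= |a u - b v|^2] with [a = <v,v>] and [b = <u,v>]. *)
Lemma sqr_dotp_le u v : dotp u v ^+ 2 <= dotp u u * dotp v v.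
Proof.
have [->|v0] := eqVneq v 0; first by rewrite dotpC !dotp0l expr0n mulr0.
set a := dotp v v; set b := dotp u v.
have a0 : 0 < a by rewrite lt_def dotpp_eq0 v0 dotpp_ge0.
have := dotpp_ge0 (a *: u - b *: v).
rewrite !(dotpBl, dotpBr, dotpZl, dotpZr) (dotpC v u) -/a -/b => h.
have : 0 <= a * (a * dotp u u - b ^+ 2) by nra.
by rewrite pmulr_rge0 // subr_ge0 mulrC.
Qed.

Lemma dotp_le u v : dotp u v <= enorm u * enorm v.
Proof.
have [uv0|uv0] := lerP (dotp u v) 0; first by rewrite (le_trans uv0) ?mulr_ge0 ?enorm_ge0.
rewrite -(ler_pXn2r (n := 2)) ?nnegrE ?mulr_ge0 ?enorm_ge0 ?(ltW uv0) //.
by rewrite exprMn !sqr_enorm sqr_dotp_le.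
Qed.

Lemma dotp_ge u v : - (enorm u * enorm v) <= dotp u v.
Proof. by rewrite lerNl -dotpNl -(enormN u) dotp_le. Qed.

Lemma enormD u v : enorm (u + v) <= enorm u + enorm v.
Proof.
apply: enorm_le; first by rewrite addr_ge0 ?enorm_ge0.
rewrite dotpDl !dotpDr (dotpC v u) -!sqr_enorm.
have := dotp_le u v; lra.
Qed.

Lemma dist_triangle u v w : enorm (u - w) <= enorm (u - v) + enorm (v - w).
Proof. by have := enormD (u - v) (v - w); rewrite addrA subrK. Qed.

Lemma D1_left x y : D1 x y x.
Proof. by rewrite /D1 subrr dotp0l lexx -opprB dotpNl dotpNr opprK dotpp_ge0. Qed.

Lemma D1_right x y : D1 x y y.
Proof. by rewrite /D1 subrr dotp0l lexx andbT -opprB dotpNl dotpNr opprK dotpp_ge0. Qed.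

End Euclid.

Section Walks.
Variables (R : realType) (d : nat).
Notation pt := 'rV[R]_d.
Implicit Types (a x z : pt) (s V : seq pt) (E : seq (pt * pt)).

(* A simple walk never returns to its start, so after its first step it avoids
   the first edge, which can be removed from the edge list. *)
Lemma dist_last_le_edges E a s : path (adj E) a s -> uniq (a :: s) ->
  enorm (last a s - a) <= \sum_(e <- E) enorm (e.1 - e.2).
Proof.
elim: s a E => [|b s IH] a E /=.
  by move=> _ _; rewrite subrr enorm0 sumr_ge0 // => e _; apply: enorm_ge0.
move=> /andP [ab bs] /andP [a_bs /andP [b_s us]].
have [e [eE ab_e ea]] : exists e, [/\ e \in E, enorm (e.1 - e.2) = enorm (b - a)
    & (e.1 == a) || (e.2 == a)].
  case/orP: ab => [abE|baE]; [exists (a, b) | exists (b, a)].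
  - by rewrite abE /= eqxx distC.
  - by rewrite baE /= eqxx orbT.
rewrite (big_rem _ eE) /= ab_e; apply: le_trans (dist_triangle _ b _) _.
rewrite [X in _ <= X]addrC lerD2r; apply: IH; last by rewrite /= b_s.
have notin_e p q : p != a -> q != a -> ((p, q) == e) = false.
  by move=> pa qa; apply/eqP => pqe; move: ea; rewrite -pqe /= (negPf pa) (negPf qa).
apply: (@sub_in_path _ (predC1 a)) bs.
- move=> p q /= pa qa; rewrite /adj => /orP [] pqE; apply/orP; [left|right];
    by apply: rem_mem; rewrite ?notin_e.
- by apply/allP => p ps /=; apply: contraNneq a_bs => <-.
Qed.

Lemma animal_dist_le (A : animal R d) a z : is_animal A ->
  a \in aV A -> z \in aV A -> enorm (z - a) <= animal_len A.
Proof.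
case=> _ _ _ connA aA zA; have [s [walk <-]] := connA a z aA zA.
by case: (shortenP walk) => s' walk' uniq' _; apply: dist_last_le_edges.
Qed.

Lemma le_dist_set x V (c : R) :
  V != [::] -> (forall v, v \in V -> c <= enorm (x - v)) -> c <= dist_set x V.
Proof.
case: V => // v0 V _ cV; rewrite /dist_set big_seq.
by apply: le_bigmin => [|v]; [apply: cV; rewrite mem_head | apply: cV].
Qed.

Lemma dist_set_le x V v : v \in V -> dist_set x V <= enorm (x - v).
Proof. by move=> vV; apply: ge_bigmin_seq. Qed.

Lemma dist_set_ge0 x V : 0 <= dist_set x V.
Proof.
case: V => [|v V]; first by rewrite /dist_set big_nil subrr enorm0.
by apply: le_dist_set => // w _; apply: enorm_ge0.
Qed.

Lemma dist_set_lipschitz x x' V : dist_set x' V <= dist_set x V + enorm (x' - x).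
Proof.
case: V => [|v V]; first by rewrite /dist_set !big_nil !subrr enorm0 add0r enorm_ge0.
rewrite -lerBlDr; apply: le_dist_set => // w wV.
by rewrite lerBlDl; apply: le_trans (dist_set_le x' wV) (dist_triangle _ x _).
Qed.

Lemma animal_vertex_dist (A : animal R d) x z : is_animal A -> z \in aV A ->
  enorm (z - x) <= dist_set x (aV A) + animal_len A.
Proof.
move=> animA zA; rewrite -lerBlDr; apply: le_dist_set => [|w wA].
  by apply: contraTneq zA => ->.
rewrite lerBlDl; apply: le_trans (dist_triangle _ w _) _.
by rewrite (distC w) lerD2r animal_dist_le.
Qed.

End Walks.

Section Paths.
Variables (R : realType) (d : nat).
Notation pt := 'rV[R]_d.
Implicit Types (a b c z : pt) (s p : seq pt).

Lemma path_len_cons a b s : path_len (a :: b :: s) = enorm (a - b) + path_len (b :: s).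
Proof. by rewrite /path_len /= big_cons. Qed.

Lemma path_edges_cons a b s : path_edges (a :: b :: s) = (a, b) :: path_edges (b :: s).
Proof. by []. Qed.

Lemma path_len_ge0 p : 0 <= path_len p.
Proof. by apply: sumr_ge0 => e _; apply: enorm_ge0. Qed.

Lemma path_len_rcons a s c :
  path_len (rcons (a :: s) c) = path_len (a :: s) + enorm (last a s - c).
Proof.
elim: s a => [|b s IH] a /=.
  by rewrite path_len_cons /path_len /= !big_nil add0r addr0.
by rewrite path_len_cons -rcons_cons IH path_len_cons addrA.
Qed.

Lemma dist_head_le_path_len a s z : z \in a :: s -> enorm (z - a) <= path_len (a :: s).
Proof.
elim: s a => [|b s IH] a; rewrite in_cons => /predU1P [->|zs];
  rewrite ?subrr ?enorm0 ?path_len_ge0 //.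
rewrite path_len_cons; apply: le_trans (dist_triangle z b a) _.
by rewrite addrC distC lerD2l IH.
Qed.

Lemma path_edges_rcons p c : {subset path_edges p <= path_edges (rcons p c)}.
Proof.
elim: p => [|a [|b s] IH] //= e; rewrite in_cons => /predU1P [->|es].
  by rewrite mem_head.
by rewrite in_cons IH ?orbT.
Qed.

End Paths.

Section Extension.
Variables (R : realType) (d : nat).
Notation pt := 'rV[R]_d.
Variables (x y xh yh : pt) (l delta : R).
Hypothesis cover : forall z, D1 x y z -> enorm (z - x) <= l -> D1 xh yh z.
Hypothesis shift : enorm (xh - x) + enorm (yh - y) <= delta.

Lemma inP1_extend p : inP1 x y l p ->
  inP1 xh yh (l + delta) (xh :: rcons p yh) /\ path_incl p (xh :: rcons p yh).
Proof.
case: p => [|a s] [[//= _ ax ys len_p] Dp]; subst a.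
split; [split; [split|] | split] => //=.
- by rewrite last_rcons.
- rewrite -rcons_cons path_len_cons path_len_rcons ys (distC y yh).
  by move: len_p shift; lra.
- rewrite D1_left all_rcons D1_right; apply/(allP (s := x :: s)) => z zp.
  apply: cover; first exact: (allP (Dp : all _ (x :: s))).
  exact: le_trans (dist_head_le_path_len zp) len_p.
- by move=> z zp; rewrite -rcons_cons in_cons mem_rcons in_cons zp !orbT.
- move=> e ep; left.
  by rewrite path_edges_cons in_cons -rcons_cons path_edges_rcons ?orbT.
Qed.

Lemma inA1_extend A : inA1 x y l A -> inA1 xh yh (l + delta) A.
Proof.
case=> [[animA lenA] DA]; split; [split => //|].
- case: lenA => [|lenA]; [by left | right].
  have := dist_set_lipschitz x xh (aV A); have := dist_set_lipschitz y yh (aV A).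
  by move: lenA shift; lra.
- apply/allP => z zA; apply: cover; first exact: (allP DA).
  case: lenA => [V0|lenA]; first by rewrite V0 in zA.
  have := animal_vertex_dist x animA zA; have := dist_set_ge0 y (aV A).
  by move: lenA; lra.
Qed.

End Extension.

Lemma animal_incl_refl R d (A : animal R d) : animal_incl A A.
Proof. by split => // -[a b] eA; rewrite /adj eA. Qed.

Section PushApart.
Variables (R : realType) (d : nat).
Notation pt := 'rV[R]_d.
Variables (x y u xh yh : pt) (n t del : R).
Hypotheses (u1 : dotp u u = 1) (n_gt0 : 0 < n) (xy : x - y = n *: u).
Hypotheses (del_ge0 : 0 <= del) (del_le_t : del <= t).
Hypotheses (xh_near : enorm (xh - (x + t *: u)) <= del)
  (yh_near : enorm (yh - (y - t *: u)) <= del).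

Let enorm_u : enorm u = 1.
Proof. by rewrite /enorm u1 sqrtr1. Qed.

Let enorm_tu : enorm (t *: u) = t.
Proof. by rewrite enormZ enorm_u mulr1 ger0_norm // (le_trans del_ge0). Qed.

Let xy_i i : x 0 i - y 0 i = n * u 0 i.
Proof. by have := congr1 (fun v : pt => v 0 i) xy; rewrite !mxE. Qed.

Lemma dist_push_left : enorm (xh - x) <= t + del.
Proof.
have -> : xh - x = t *: u + (xh - (x + t *: u)) by apply/rowP => i; rewrite !mxE; lra.
by apply: le_trans (enormD _ _) _; rewrite enorm_tu lerD2l.
Qed.

Lemma dist_push_right : enorm (yh - y) <= t + del.
Proof.
have -> : yh - y = - (t *: u) + (yh - (y - t *: u)) by apply/rowP => i; rewrite !mxE; lra.
by apply: le_trans (enormD _ _) _; rewrite enormN enorm_tu lerD2l.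
Qed.

Let e1 := xh - (x + t *: u).
Let e2 := yh - (y - t *: u).

Let push_diff : xh - yh = (n + 2 * t) *: u - (e2 - e1).
Proof. by apply/rowP => i; rewrite !mxE; have := xy_i i; lra. Qed.

Let enorm_e12 : enorm (e2 - e1) <= 2 * del.
Proof. by apply: le_trans (enormD _ _) _; rewrite enormN; move: xh_near yh_near; lra. Qed.

Lemma dist_le_push : enorm (x - y) <= enorm (xh - yh).
Proof.
have := enormD (xh - yh) (e2 - e1); rewrite {1}push_diff subrK xy !enormZ enorm_u !mulr1.
by rewrite !ger0_norm; move: enorm_e12 del_ge0 del_le_t n_gt0; lra.
Qed.

(* With [w = z - xh], [<w, yh - xh> = (n + 2t) <w, -u> + <w, e2 - e1>]: the first
   term is at least [2t (t - del)], the second at least [- 2 del (M + t + del)]. *)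
Lemma dotp_push_apart_ge0 z M : del * M <= t ^+ 2 - 2 * t * del - del ^+ 2 ->
  enorm (z - x) <= M -> 0 <= dotp (z - x) (y - x) -> 0 <= dotp (z - xh) (yh - xh).
Proof.
move=> small_del zxM zx_yx.
have zx_u : dotp (z - x) u <= 0.
  by move: zx_yx; rewrite -(opprB x y) xy dotpNr dotpZr oppr_ge0 pmulr_rle0.
have e1_u : - del <= dotp e1 u.
  by apply: le_trans (dotp_ge e1 u); rewrite enorm_u mulr1 lerN2.
have w_def : z - xh = (z - x) - t *: u - e1 by apply/rowP => i; rewrite !mxE; lra.
have w_u : dotp (z - xh) u = dotp (z - x) u - t - dotp e1 u.
  by rewrite w_def !dotpBl dotpZl u1 mulr1.
have w_norm : enorm (z - xh) <= M + t + del.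
  rewrite w_def; apply: le_trans (enormD _ _) _; rewrite enormN.
  apply: le_trans (lerD (enormD _ _) (lexx _)) _; rewrite enormN enorm_tu.
  by move: zxM xh_near; lra.
have cross := dotp_ge (z - xh) (e2 - e1).
have cross_bound : enorm (z - xh) * enorm (e2 - e1) <= (M + t + del) * (2 * del).
  by apply: ler_pM; rewrite ?enorm_ge0 ?enorm_e12.
have yh_xh : yh - xh = (n + 2 * t) *: (- u) + (e2 - e1).
  by rewrite -(opprB xh yh) push_diff scalerN opprB addrC.
rewrite yh_xh dotpDr dotpZr dotpNr w_u.
move: cross cross_bound small_del zx_u e1_u n_gt0 del_ge0 del_le_t; nra.
Qed.

End PushApart.

Section LatticeEndpoints.
Variables (R : realType) (d : nat).
Notation pt := 'rV[R]_d.
Implicit Types x y z u v : pt.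

Lemma D1_push_apart x y u xh yh (n t del M : R) :
  dotp u u = 1 -> 0 < n -> x - y = n *: u -> 0 <= del -> del <= t ->
  enorm (xh - (x + t *: u)) <= del -> enorm (yh - (y - t *: u)) <= del ->
  del * M <= t ^+ 2 - 2 * t * del - del ^+ 2 ->
  forall z, enorm (z - x) <= M -> enorm (z - y) <= M -> D1 x y z -> D1 xh yh z.
Proof.
move=> u1 n0 xy del0 del_t xh_near yh_near small z zx zy.
rewrite /D1 => /andP [zxy zyx]; apply/andP; split.
  exact: (dotp_push_apart_ge0 u1 n0 xy del0 del_t xh_near yh_near small zx zxy).
have u1' : dotp (- u) (- u) = 1 by rewrite dotpNl dotpNr opprK.
have yx : y - x = n *: - u by rewrite scalerN -xy opprB.
apply: (dotp_push_apart_ge0 u1' n0 yx del0 del_t _ _ small zy zyx).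
- by rewrite scalerN.
- by rewrite scalerN opprK.
Qed.

Definition lattice_floor v : pt := \row_i (Num.floor (v 0 i))%:~R.

Lemma lattice_floor_is_lattice v : is_lattice (lattice_floor v).
Proof. by apply/forallP => i; rewrite mxE intr_int. Qed.

(* Each coordinate moves by less than 1. *)
Lemma dist_lattice_floor v : enorm (lattice_floor v - v) <= d%:R.
Proof.
apply: enorm_le => //; apply: (@le_trans _ _ (\sum_(i < d) (1 : R))).
  apply: ler_sum => i _; rewrite !mxE.
  have /andP [fl_le lt_fl1] := floor_itv (v 0 i); rewrite intrD in lt_fl1.
  by move: fl_le lt_fl1; nra.
rewrite sumr_const card_ord -natrX ler_nat.
by case: (d) => // n; rewrite expnS leq_pmulr ?expn_gt0.
Qed.

Lemma lattice_push_apart x y (t M : R) : x != y ->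
  d%:R <= t -> d%:R * M <= t ^+ 2 - 2 * t * d%:R - d%:R ^+ 2 ->
  exists xh yh, [/\ is_lattice xh && is_lattice yh,
    enorm (xh - x) <= t + d%:R, enorm (yh - y) <= t + d%:R,
    enorm (x - y) <= enorm (xh - yh) &
    forall z, enorm (z - x) <= M -> enorm (z - y) <= M -> D1 x y z -> D1 xh yh z].
Proof.
move=> xy D_t small; set n := enorm (x - y).
have n0 : 0 < n by apply: enorm_gt0; rewrite subr_eq0.
set u := n^-1 *: (x - y).
have xy_u : x - y = n *: u by rewrite scalerA mulfV ?gt_eqF // scale1r.
have u1 : dotp u u = 1.
  by rewrite dotpZl dotpZr -sqr_enorm -/n mulrA -expr2 -exprMn mulVf ?gt_eqF // expr1n.
have D0 : 0 <= d%:R :> R by [].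
exists (lattice_floor (x + t *: u)), (lattice_floor (y - t *: u)).
have xh_near := dist_lattice_floor (x + t *: u).
have yh_near := dist_lattice_floor (y - t *: u).
split; first by rewrite !lattice_floor_is_lattice.
- exact: (dist_push_left u1 D0 D_t xh_near).
- exact: (dist_push_right u1 D0 D_t yh_near).
- exact: (dist_le_push u1 n0 xy_u D0 D_t xh_near yh_near).
- exact: (D1_push_apart u1 n0 xy_u D0 D_t xh_near yh_near small).
Qed.

End LatticeEndpoints.

Lemma push_scale_bounds (R : realFieldType) (D eps l : R) :
  0 <= D -> 0 < eps -> eps < 1 / 8 -> 2 * (D + 1) / eps ^+ 2 <= l ->
  let t := 2 * eps * l in
  [/\ D <= t, D * (4 * l) <= t ^+ 2 - 2 * t * D - D ^+ 2 & t + D <= l].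
Proof.
move=> D0 eps0 eps8 lL t.
have eps2 : 0 < eps ^+ 2 by rewrite exprn_gt0.
have DL : 2 * (D + 1) <= eps ^+ 2 * l by move: lL; rewrite ler_pdivrMr // [l * _]mulrC.
have epsl : 8 * (eps ^+ 2 * l) <= eps * l.
  have l0 : 0 <= l by move: DL D0 eps2; nra.
  by rewrite expr2; move: l0 eps0 eps8; nra.
have tt : t ^+ 2 = 4 * l * (eps ^+ 2 * l) by rewrite /t; ring.
by split; rewrite ?tt /t; move: DL epsl eps0 eps8 D0; nra.
Qed.

Unset Implicit Arguments.

Theorem lemma5p8 (R : realType) (d : nat) (hd : (2 <= d)%N) (eps : R)
  (heps0 : 0 < eps) (heps1 : eps < 1 / 8) :
  exists L : R, forall l : R, 0 < l -> L <= l ->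
  forall (x y : 'rV[R]_d), cball 0 (2 * l) x -> cball 0 (2 * l) y -> x != y ->
  forall l' : R, enorm (x - y) <= l' -> l' <= 2 * l ->
  (exists xh yh : 'rV[R]_d,
     [/\ cball 0 (3 * l) xh && is_lattice xh, cball 0 (3 * l) yh && is_lattice yh,
         enorm (x - y) <= enorm (xh - yh) &
         forall p, inP1 x y l' p ->
           exists q, inP1 xh yh (l' + 8 * eps * l) q /\ path_incl p q])
  /\
  (exists xh yh : 'rV[R]_d,
     [/\ cball 0 (3 * l) xh && is_lattice xh, cball 0 (3 * l) yh && is_lattice yh,
         enorm (x - y) <= enorm (xh - yh) &
         forall A, inA1 x y l' A ->
           exists B, inA1 xh yh (l' + 8 * eps * l) B /\ animal_incl A B]).
Proof.
exists (2 * (d%:R + 1) / eps ^+ 2) => l l0 lL x y x_ball y_ball xy l' xy_l' l'_l.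
have [D_t small t_D] := push_scale_bounds (ler0n _ d) heps0 heps1 lL.
have [xh [yh [lat xh_x yh_y xy_push cover]]] := lattice_push_apart xy D_t small.
have cover' z : D1 x y z -> enorm (z - x) <= l' -> D1 xh yh z.
  move=> Dz zx; apply: cover => //; first by move: zx l'_l; lra.
  by have := dist_triangle z x y; move: zx xy_l' l'_l; lra.
have shift : enorm (xh - x) + enorm (yh - y) <= 8 * eps * l.
  by move: xh_x yh_y D_t; lra.
have in_ball (v vh : 'rV[R]_d) :
    cball 0 (2 * l) v -> enorm (vh - v) <= 2 * eps * l + d%:R -> cball 0 (3 * l) vh.
  rewrite /cball !subr0 => v_ball vh_v.
  by have := dist_triangle vh v 0; rewrite !subr0; move: v_ball vh_v t_D; lra.
case/andP: lat => xh_lat yh_lat.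
have xh_ok : cball 0 (3 * l) xh && is_lattice xh by rewrite xh_lat (in_ball x).
have yh_ok : cball 0 (3 * l) yh && is_lattice yh by rewrite yh_lat (in_ball y).
split; exists xh, yh; split => //.
- by move=> p pP; exists (xh :: rcons p yh); exact: (inP1_extend cover' shift pP).
- move=> A AP; exists A.
  by split; [exact: (inA1_extend cover' shift AP) | exact: animal_incl_refl].
Qed.
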